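(* Let $K\ge 2$, $i\in[K]$, and let $(G_{ij})_{j\in[K]\setminus\{i\}}$ be integrable real random variables on a probability space, with $G:=\min_{j\ne i}G_{ij}$. Let $L\ge 1$ and let $q\sim\mathrm{Ber}(1/L)$ be independent of $(G_{ij})_j$. Define the event $E=\{G>0\}\cup\{G\le 0,\ q=1\}$. Then for every $j\ne i$, $$\mathbb E[G_{ij}\mathbb 1_E]=\Big(1-\frac1L\Big)\mathbb E[G_{ij}\mathbb 1_{\{G>0\}}]+\frac1L\,\mathbb E[G_{ij}].$$ Moreover, let $\epsilon\in[0,1)$, $\tau,\rho>0$, and suppose $\Pr(G\ge\tau)\ge\rho$ and $\mathbb E[G_{ij}]\ge -1$ for all $j\ne i$. If $$L\ge 1+\frac{1-\epsilon}{\tau\rho+\epsilon},$$ then $\mathbb E[G_{ij}\mathbb 1_E]\ge-\epsilon$ for every $j\neq i$.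
   Context: $\mathrm{Ber}(1/L)$ is the Bernoulli distribution with success probability $1/L$; $\mathbb 1_E$ is the indicator of the event $E$. *)

From mathcomp Require Import all_boot all_order all_algebra.
From mathcomp Require Import all_classical all_reals all_analysis.
Set Implicit Arguments. Unset Strict Implicit. Unset Printing Implicit Defensive.
Import Order.TTheory GRing.Theory Num.Theory.
Local Open Scope classical_set_scope.
Local Open Scope ring_scope.

(* G(w) := min_{j <> i} X_j(w)  (computed in \bar R with neutral +oo; the
   index set is nonempty when K >= 2, so the result is a real number). *)
Definition Gmin (R : realType) (T : Type) (K : nat) (i : 'I_K)
  (X : 'I_K -> T -> R) (w : T) : R :=
  fine (\big[mine/+oo%E]_(j < K | j != i) (X j w)%:E).

Definition sigma_family d (T : measurableType d) (R : realType) (K : nat)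
  (i : 'I_K) (X : 'I_K -> T -> R) : set (set T) :=
  <<s setT, \bigcup_(j in [set j : 'I_K | j != i])
              preimage_set_system setT (X j) measurable >>.

Definition indep_bool_sigma d (T : measurableType d) (R : realType)
  (P : probability T R) (q : T -> bool) (F : set (set T)) : Prop :=
  forall (b : bool) (B : set T), F B ->
    P ([set w | q w = b] `&` B) = (P [set w | q w = b] * P B)%E.

Definition Eevent (R : realType) (T : Type) (K : nat) (i : 'I_K)
  (X : 'I_K -> T -> R) (q : T -> bool) : set T :=
  [set w | 0 < Gmin i X w] `|` [set w | Gmin i X w <= 0 /\ q w].

From mathcomp Require Import all_boot all_order all_algebra.
From mathcomp Require Import all_classical all_reals all_analysis.
From mathcomp Require Import measurable_realfun ring lra.
Import Order.TTheory GRing.Theory Num.Theory.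
Local Open Scope classical_set_scope.
Local Open Scope ring_scope.

(* Off the event {G > 0} the event E is just {q}, so that
   X_j 1_E = X_j 1_{G > 0} + (X_j 1_{G <= 0}) 1_{q}.  The function X_j 1_{G <= 0}
   is measurable for the sigma-algebra generated by the X_k (k <> i), hence
   independent of q, and the expectation of its product with 1_{q} factors as
   P(q) E[X_j 1_{G <= 0}]; rearranging gives the identity.  For the bound,
   X_j >= G >= tau on {G >= tau} gives E[X_j 1_{G > 0}] >= tau rho, so the right
   hand side is a 1/L-mixture of a number >= tau rho and a number >= -1, which is
   >= -eps as soon as L >= 1 + (1 - eps) / (tau rho + eps). *)

Lemma exists_ord_neq {K : nat} (i : 'I_K) : (2 <= K)%N -> exists j : 'I_K, j != i.
Proof.
case: K i => [|[|K]] i // _.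
have [->|/negPf i0] := eqVneq i ord0; first by exists ord_max.
by exists ord0; rewrite eq_sym i0.
Qed.

Section Gmin.
Context {R : realType} {K : nat} (i : 'I_K).
Hypothesis K2 : (2 <= K)%N.
Context {T : Type} (Y : 'I_K -> T -> R).

Lemma Gmin_attained (w : T) : exists2 k, k != i & Gmin i Y w = Y k w.
Proof.
have [j ji] := exists_ord_neq i K2.
have [k ki bk] := eq_bigmin (x := +oo%E) j (fun j => j != i)
  (fun j => (Y j w)%:E) ji (fun _ _ => leey _).
by exists k; rewrite // /Gmin bk.
Qed.

Lemma EFin_Gmin (w : T) :
  (Gmin i Y w)%:E = \big[mine/+oo%E]_(j < K | j != i) (Y j w)%:E.
Proof.
have [j ji] := exists_ord_neq i K2.
have [k _ bk] := eq_bigmin (x := +oo%E) j (fun j => j != i)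
  (fun j => (Y j w)%:E) ji (fun _ _ => leey _).
by rewrite /Gmin bk.
Qed.

Lemma Gmin_le (w : T) (k : 'I_K) : k != i -> Gmin i Y w <= Y k w.
Proof. by move=> ki; rewrite -lee_fin EFin_Gmin; exact: bigmin_le_cond. Qed.

Lemma preimage_Gmin (A : set R) : (forall x y, A x -> x <= y -> A y) ->
  Gmin i Y @^-1` A = \bigcap_(k in [set k | k != i]) Y k @^-1` A.
Proof.
move=> upA; apply/seteqP; split => w /=.
  by move=> AG k /= ki; exact: upA AG (Gmin_le w k ki).
by have [k ki ->] := Gmin_attained w; exact.
Qed.

End Gmin.

Section measurable_Gmin.
Context {R : realType} {K : nat} {i : 'I_K} {d} {T : measurableType d}
  {Y : 'I_K -> T -> R}.
Hypotheses (K2 : (2 <= K)%N) (mY : forall k, k != i -> measurable_fun setT (Y k)).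

Let measurable_preimage_Gmin (A : set R) :
  measurable A -> (forall x y, A x -> x <= y -> A y) ->
  measurable (Gmin i Y @^-1` A).
Proof.
move=> mA upA; rewrite preimage_Gmin//.
apply: fin_bigcap_measurable; first exact: finite_finset.
by move=> k /= ki; rewrite -[X in measurable X]setTI; exact: mY.
Qed.

Lemma measurable_Gmin_gt (c : R) : measurable [set w | c < Gmin i Y w].
Proof.
have -> : [set w | c < Gmin i Y w] = Gmin i Y @^-1` `]c, +oo[.
  by apply/seteqP; split => w /=; rewrite in_itv /= andbT.
apply: measurable_preimage_Gmin; first exact: measurable_itv.
by move=> x y /=; rewrite !in_itv /= !andbT => /lt_le_trans; apply.
Qed.

Lemma measurable_Gmin_ge (c : R) : measurable [set w | c <= Gmin i Y w].
Proof.
have -> : [set w | c <= Gmin i Y w] = Gmin i Y @^-1` `[c, +oo[.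
  by apply/seteqP; split => w /=; rewrite in_itv /= andbT.
apply: measurable_preimage_Gmin; first exact: measurable_itv.
by move=> x y /=; rewrite !in_itv /= !andbT => /le_trans; apply.
Qed.

End measurable_Gmin.

Lemma integrable_mulindic {d} {T : measurableType d} {R : realType}
    {mu : {measure set T -> \bar R}} {f : T -> R} {S : set T} :
  measurable S -> mu.-integrable setT (EFin \o f) ->
  mu.-integrable setT (EFin \o (fun w => f w * \1_S w)).
Proof.
move=> mS fi; have mf := measurable_int mu fi.
apply: le_integrable fi => //.
  apply/measurable_EFinP/measurable_funM; last exact: measurable_indic.
  exact/measurable_EFinP.
move=> w _ /=; rewrite lee_fin normrM indicE.
by case: (w \in S); rewrite ?normr1 ?normr0 ?mulr1 ?mulr0.
Qed.

Section integral_mulindic_indep.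
Context {d} {T : measurableType d} {R : realType} {mu : {measure set T -> \bar R}}
  {Q : set T} {p : R}.
Hypotheses (mQ : measurable Q) (p0 : 0 <= p).

Local Notation indep_of f := (forall S, measurable S ->
  mu (Q `&` f @^-1` S) = (p%:E * mu (f @^-1` S))%E).

(* Points where the integrand vanishes do not contribute, and on (0, +oo) the
   pushforward of f 1_Q is p times that of f. *)
Let pos := `]0, +oo[%classic : set R.

Let integral_pushforward_pos (g : T -> R) :
  measurable_fun setT g -> (forall w, 0 <= g w) ->
  (\int[mu]_w (g w)%:E = \int[pushforward mu g]_(y in pos) y%:E)%E.
Proof.
move=> mg g0; rewrite [RHS]ge0_integral_pushforward//; first last.
- by move=> y; rewrite inE /pos /= in_itv /= andbT lee_fin => /ltW.
- exact: measurable_itv.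
rewrite [RHS]integral_mkcond; apply: eq_integral => w _ /=.
rewrite /patch; case: ifPn => // /negP; rewrite inE /pos /= in_itv /= andbT => gw.
by have -> : g w = 0 by apply/eqP; rewrite eq_le g0 andbT leNgt; exact/negP.
Qed.

Lemma integral_mulindic_indep_ge0 (f : T -> R) :
  measurable_fun setT f -> (forall w, 0 <= f w) -> indep_of f ->
  (\int[mu]_w (f w * \1_Q w)%:E = p%:E * \int[mu]_w (f w)%:E)%E.
Proof.
move=> mf f0 indf.
have mfQ : measurable_fun setT (fun w => f w * \1_Q w).
  by apply: measurable_funM => //; exact: measurable_indic.
have fQ0 w : 0 <= f w * \1_Q w by rewrite mulr_ge0.
rewrite !integral_pushforward_pos//.
rewrite (eq_measure_integral (mscale (NngNum p0) (pushforward mu f))); last first.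
  move=> A mA Apos; rewrite /= /pushforward /mscale /= -indf//; congr (mu _).
  apply/seteqP; split => w /=; rewrite indicE.
    case: (boolP (w \in Q)) => [/set_mem wQ|_]; first by rewrite mulr1.
    by rewrite mulr0 => /Apos; rewrite /pos /= in_itv /= ltxx.
  by move=> [wQ fA]; rewrite mem_set// mulr1.
rewrite ge0_integral_mscale//.
- exact: measurable_itv.
- by move=> y; rewrite /pos /= in_itv /= andbT lee_fin => /ltW.
Qed.

Let indep_of_comp (f : T -> R) (g : R -> R) :
  measurable_fun setT g -> indep_of f -> indep_of (g \o f).
Proof.
move=> mg indf S mS; apply: (indf (g @^-1` S)).
by rewrite -[X in measurable X]setTI; exact: mg.
Qed.

Lemma integral_mulindic_indep (f : T -> R) :
  mu.-integrable setT (EFin \o f) -> indep_of f ->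
  (\int[mu]_w (f w * \1_Q w)%:E = p%:E * \int[mu]_w (f w)%:E)%E.
Proof.
move=> fi indf.
have mf : measurable_fun setT f by exact/measurable_EFinP/(measurable_int mu fi).
have fpi := integrable_funrpos measurableT fi.
have fni := integrable_funrneg measurableT fi.
have fE w : f w = f^\+ w - f^\- w by rewrite -[in LHS](funrposBneg f).
have indfp : indep_of f^\+.
  apply: (@indep_of_comp f (fun x => Num.max x 0)) => //.
  exact: measurable_maxr.
have indfn : indep_of f^\-.
  apply: (@indep_of_comp f (fun x => Num.max (- x) 0)) => //.
  by apply: measurable_maxr => //; exact: measurable_funN.
transitivity (\int[mu]_w ((f^\+ w * \1_Q w)%:E - (f^\- w * \1_Q w)%:E))%E.
  by apply: eq_integral => w _; rewrite -EFinB -mulrBl -fE.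
rewrite integralB_EFin//; [|exact: integrable_mulindic..].
rewrite (integral_mulindic_indep_ge0 _ (measurable_funrpos mf) (@funrpos_ge0 _ _ f) indfp).
rewrite (integral_mulindic_indep_ge0 _ (measurable_funrneg mf) (@funrneg_ge0 _ _ f) indfn).
rewrite -muleBr//; last exact/fin_num_adde_defr/integrable_fin_num.
rewrite -integralB_EFin//; congr (_ * _)%E.
by apply: eq_integral => w _; rewrite -EFinB -fE.
Qed.

End integral_mulindic_indep.

Lemma convex_comb_ge_opp (R : realFieldType) (L c eps A E : R) :
  1 <= L -> 0 < c -> 0 <= eps -> 1 + (1 - eps) / (c + eps) <= L ->
  c <= A -> -1 <= E -> - eps <= (1 - L^-1) * A + L^-1 * E.
Proof.
move=> L1 c0 eps0 HL cA E1.
have L0 : 0 < L by apply: lt_le_trans L1.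
have ceps0 : 0 < c + eps by rewrite ltr_pwDl.
have HLc : 1 + c <= L * (c + eps).
  have := ler_wpM2r (ltW ceps0) HL.
  by rewrite mulrDl mul1r divfK ?gt_eqF// => h; lra.
have : 0 <= L * ((1 - L^-1) * A + L^-1 * E + eps).
  have -> : L * ((1 - L^-1) * A + L^-1 * E + eps) = (L - 1) * A + E + L * eps.
    by field; rewrite gt_eqF.
  have : 0 <= (L - 1) * (A - c) by apply: mulr_ge0; lra.
  nra.
by rewrite pmulr_rge0// => h; lra.
Qed.

Section Eevent.
Context {d} {T : measurableType d} {R : realType} {P : probability T R}
  {K : nat} {i : 'I_K} {X : 'I_K -> T -> R} {q : T -> bool}.
Hypotheses (K2 : (2 <= K)%N) (mX : forall k, k != i -> measurable_fun setT (X k)).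

Local Notation Gpos := [set w | 0 < Gmin i X w].

Lemma indic_Eevent (w : T) :
  \1_(Eevent i X q) w = \1_Gpos w + \1_(~` Gpos) w * \1_[set w | q w] w :> R.
Proof.
rewrite !indicE; have [Gw|Gw] := ltP 0 (Gmin i X w).
  rewrite mem_set; last by left.
  by rewrite (mem_set (Gw : Gpos w)) memNset ?mul0r ?addr0 //= => /(_ Gw).
have nGw : ~ Gpos w by rewrite /= ltNge Gw.
rewrite (memNset nGw) (mem_set (nGw : (~` Gpos) w)) add0r mul1r.
suff -> : (w \in Eevent i X q) = q w by rewrite mem_setE.
apply/idP/idP => [/set_mem [/nGw//|[]//]|qw].
by apply/mem_set; right.
Qed.

Lemma sigma_family_mulindic_Gnonpos (j : 'I_K) (S : set R) : j != i -> measurable S ->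
  sigma_family i X ((fun w => X j w * \1_(~` Gpos) w) @^-1` S).
Proof.
move=> ji mS.
(* measurability for sigma_family i X is measurability on this type *)
pose Tg := g_sigma_algebraType (\bigcup_(k in [set k : 'I_K | k != i])
  preimage_set_system setT (X k) measurable).
have mXg k : k != i -> measurable_fun (setT : set Tg) (X k : Tg -> R).
  by move=> ki _ B mB; apply: sub_sigma_algebra; exists k => //; exists B.
have mGg : measurable (Gpos : set Tg) := measurable_Gmin_gt K2 mXg 0.
have mfg : measurable_fun (setT : set Tg)
    (fun w : Tg => X j w * \1_(~` Gpos) w).
  by apply: measurable_funM; [exact: mXg|exact/measurable_indic/measurableC].
by have := mfg measurableT S mS; rewrite setTI.
Qed.

Lemma integral_mulindic_Gpos_ge (j : 'I_K) (tau rho : R) :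
  j != i -> 0 < tau -> (rho%:E <= P [set w | (tau <= Gmin i X w)%R])%E ->
  ((tau * rho)%:E <= \int[P]_w (X j w * \1_Gpos w)%:E)%E.
Proof.
move=> ji tau0 Prho.
set Gtau := [set w | tau <= Gmin i X w].
have mGtau : measurable Gtau := measurable_Gmin_ge K2 mX tau.
have mG : measurable Gpos := measurable_Gmin_gt K2 mX 0.
apply: (@le_trans _ _ (tau%:E * P Gtau)%E).
  by rewrite EFinM lee_wpmul2l// lee_fin ltW.
rewrite -(setIT Gtau) -integral_indic// -ge0_integralZl_EFin ?(ltW tau0)//;
  last exact/measurable_EFinP/measurable_indic.
apply: ge0_le_integral => //.
- by move=> w _; rewrite mule_ge0// lee_fin ltW.
- by apply: emeasurable_funM => //; exact/measurable_EFinP/measurable_indic.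
- apply/measurable_EFinP/measurable_funM; [exact: mX|exact: measurable_indic].
move=> w _; rewrite -EFinM lee_fin !indicE.
have XjG := Gmin_le i K2 X w j ji.
case: (boolP (w \in Gtau)) => [/set_mem Gw|_].
  by rewrite mem_set /= ?(lt_le_trans tau0 Gw)// !mulr1 (le_trans Gw).
rewrite mulr0; case: (boolP (w \in Gpos)) => [/set_mem /= Gw|_].
  by rewrite mulr1 (ltW (lt_le_trans Gw XjG)).
by rewrite mulr0.
Qed.

Hypotheses (mQ : measurable [set w | q w])
  (indep_q : indep_bool_sigma P q (sigma_family i X)).

Lemma integral_mulindic_Eevent (j : 'I_K) (p : R) :
  j != i -> P.-integrable setT (EFin \o X j) -> P [set w | q w] = p%:E ->
  (\int[P]_w (X j w * \1_(Eevent i X q) w)%:E =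
   (1 - p)%:E * \int[P]_w (X j w * \1_Gpos w)%:E + p%:E * 'E_P[X j])%E.
Proof.
move=> ji Xji Pq.
have p0 : 0 <= p by rewrite -lee_fin -Pq.
have mG : measurable Gpos := measurable_Gmin_gt K2 mX 0.
set f1 := fun w => X j w * \1_Gpos w.
set f2 := fun w => X j w * \1_(~` Gpos) w.
have i1 : P.-integrable setT (EFin \o f1) := integrable_mulindic mG Xji.
have i2 : P.-integrable setT (EFin \o f2) :=
  integrable_mulindic (measurableC mG) Xji.
have indep_f2 S : measurable S ->
    P ([set w | q w] `&` f2 @^-1` S) = (p%:E * P (f2 @^-1` S))%E.
  by move=> mS; rewrite (indep_q true _ (sigma_family_mulindic_Gnonpos _ _ ji mS)) Pq.
have -> : (\int[P]_w (X j w * \1_(Eevent i X q) w)%:E =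
    \int[P]_w ((f1 w)%:E + (f2 w * \1_[set w | q w] w)%:E))%E.
  by apply: eq_integral => w _; rewrite indic_Eevent mulrDr mulrA EFinD.
have -> : ('E_P[X j] = \int[P]_w ((f1 w)%:E + (f2 w)%:E))%E.
  rewrite unlock; apply: eq_integral => w _.
  by rewrite -EFinD -mulrDr indicC indicE; case: (_ \in _); rewrite ?addr0 ?add0r mulr1.
rewrite !integralD_EFin//; last exact: integrable_mulindic.
rewrite (integral_mulindic_indep mQ p0 _ i2 indep_f2).
have /fineK <- := integrable_fin_num measurableT i1.
have /fineK <- := integrable_fin_num measurableT i2.
by rewrite -!EFinM -!EFinD; congr _%:E; ring.
Qed.

Lemma integral_mulindic_Eevent_ge (j : 'I_K) (L eps tau rho : R) :
  j != i -> P.-integrable setT (EFin \o X j) -> 1 <= L ->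
  P [set w | q w] = (L^-1)%:E -> 0 <= eps -> 0 < tau -> 0 < rho ->
  (rho%:E <= P [set w | (tau <= Gmin i X w)%R])%E ->
  ((-1)%:E <= 'E_P[X j])%E -> 1 + (1 - eps) / (tau * rho + eps) <= L ->
  ((- eps)%:E <= \int[P]_w (X j w * \1_(Eevent i X q) w)%:E)%E.
Proof.
move=> ji Xji L1 Pq eps0 tau0 rho0 Prho EXj HL.
rewrite (integral_mulindic_Eevent _ _ ji Xji Pq).
have mG : measurable Gpos := measurable_Gmin_gt K2 mX 0.
have := integral_mulindic_Gpos_ge _ _ _ ji tau0 Prho.
have /fineK <- := integrable_fin_num measurableT (integrable_mulindic mG Xji).
move: EXj; have /fineK <- : ('E_P[X j])%E \is a fin_num.
  by rewrite unlock; exact: integrable_fin_num.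
rewrite -!EFinM -EFinD !lee_fin => EXj lower.
exact: convex_comb_ge_opp L1 (mulr_gt0 tau0 rho0) eps0 HL lower EXj.
Qed.

End Eevent.

Theorem mainTheorem8 (d : measure_display) (T : measurableType d)
  (R : realType) (P : probability T R) (K : nat) (i : 'I_K)
  (X : 'I_K -> {RV P >-> R}) (q : T -> bool) (L : R) :
  (2 <= K)%N ->
  (forall j, j != i -> P.-integrable setT (EFin \o X j)) ->
  1 <= L ->
  measurable_fun setT q ->
  P [set w | q w] = (L^-1)%:E ->
  indep_bool_sigma P q (sigma_family i (fun j => (X j : T -> R))) ->
  (forall j, j != i ->
     (\int[P]_w ((X j w) * \1_(Eevent i (fun j => (X j : T -> R)) q) w)%R%:E =
       ((1 - L^-1)%:E *
          \int[P]_w ((X j w) * \1_[set w | (0 < Gmin i (fun j => (X j : T -> R)) w)%R] w)%R%:E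
        + (L^-1)%:E * 'E_P[X j]))%E) /\
  (forall eps tau rho : R,
     0 <= eps -> eps < 1 -> 0 < tau -> 0 < rho ->
     (rho%:E <= P [set w | (tau <= Gmin i (fun j => (X j : T -> R)) w)%R])%E ->
     (forall j, j != i -> (-1)%:E <= 'E_P[X j])%E ->
     1 + (1 - eps) / (tau * rho + eps) <= L ->
     forall j, j != i ->
       ((- eps)%:E <=
          \int[P]_w ((X j w) * \1_(Eevent i (fun j => (X j : T -> R)) q) w)%R%:E)%E).
Proof.
move=> K2 Xint L1 mq Pq indep_q.
set Y := fun j => (X j : T -> R).
have mY k : k != i -> measurable_fun setT (Y k) by move=> _; exact: measurable_funP.
have mQ : measurable [set w | q w].
  by have := mq measurableT [set true] I; rewrite setTI.
split=> [j ji|eps tau rho eps0 _ tau0 rho0 Prho EX HL j ji].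
  exact: (integral_mulindic_Eevent K2 mY mQ indep_q _ _ ji (Xint j ji) Pq).
exact: (integral_mulindic_Eevent_ge K2 mY mQ indep_q _ _ _ _ _ ji (Xint j ji)
  L1 Pq eps0 tau0 rho0 Prho (EX j ji) HL).
Qed.
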